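(* Let $b>0$ be irrational. Then there exist a strictly increasing sequence $(n_p)_{p\ge1}$ in $\mathbb N$ and a sequence $\gamma=(\gamma_n)_{n\ge1}$ of real numbers with $\gamma_{n_p}>0$ for all $p\ge1$, $\gamma_n=0$ for $n\notin J:=\{n_p:p\ge1\}$, $\sum_{n\ge1}n\gamma_n<\infty$, such that $$\sum_{p\ge1}n_p^3\gamma_{n_p}=\infty\qquad\text{and}\qquad \omega_{n_p}(\gamma)\in b\mathbb Z\ \ \forall p\ge1,$$ where $\omega_n(\gamma):=n^2-2\sum_{k=1}^nk\gamma_k-2n\sum_{k>n}\gamma_k$. Consequently every $u_0$ in the (nonempty) set $\mathrm{Iso}_\gamma:=\{u\in L^2_{r,0}:\gamma_n(u)=\gamma_n\ \forall n\ge1\}$ does not belong to $H^1_{r,0}$, and the solution $t\mapsto\mathcal S(t)u_0$ of the BO equation is periodic in time with period $T=2\pi/b$; thus $\mathrm{Iso}_\gamma$ is entirely filled with $T$-periodic solutions that are not finite gap solutions.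
   Context: $\mathbb T=\mathbb R/2\pi\mathbb Z$. For $s\in\mathbb R$, $H^s_{r,0}$ is the Sobolev space of real-valued distributions on $\mathbb T$ of $H^s$-regularity with zero mean; $L^2_{r,0}=H^0_{r,0}$. The Benjamin–Ono (BO) equation is $\partial_tu=H\partial_x^2u-\partial_x(u^2)$, $H$ the Hilbert transform (Fourier multiplier $-i\,\mathrm{sign}(n)$, zero at $n=0$). For $\sigma\in\mathbb R$, $h^\sigma_+$ is the space of complex sequences $(z_n)_{n\ge1}$ with $\sum n^{2\sigma}|z_n|^2<\infty$. Known facts taken as given: for every $s>-1/2$ the BO equation is globally well posed in $H^s_{r,0}$ with continuous solution map $\mathcal S(t)$; there is a map $\Phi:u\mapsto(\zeta_n(u))_{n\ge1}$ which for every $s>-1/2$ is a homeomorphism $H^s_{r,0}\to h^{s+1/2}_+$ (so $u\in H^s_{r,0}$ iff $\Phi(u)\in h^{s+1/2}_+$), with $\zeta_n(\mathcal S(t)u)=e^{i\omega_nt}\zeta_n(u)$, $\omega_n=n^2-2\sum_{k=1}^nk|\zeta_k(u)|^2-2n\sum_{k>n}|\zeta_k(u)|^2$. The actions are $\gamma_n(u):=|\zeta_n(u)|^2$. A finite gap solution is one whose initial datum $u_0$ has $\zeta_n(u_0)=0$ for all sufficiently large $n$. *)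

From Stdlib Require Import Reals Lra ZArith.
From Coquelicot Require Import Coquelicot.
Open Scope R_scope.

(* Sequences indexed by n >= 1 are modelled as functions nat -> _ whose
   value at index 0 is irrelevant (we only ever use indices n >= 1). *)

Definition irrational (b : R) : Prop :=
  ~ exists (p q : Z), q <> 0%Z /\ b = IZR p / IZR q.

Definition omega (gamma : nat -> R) (n : nat) : R :=
  INR n ^ 2
  - 2 * sum_n_m (fun k => INR k * gamma k) 1 n
  - 2 * INR n * Series (fun j => gamma (n + 1 + j)%nat).

(* Birkhoff coordinates (zeta_n)_{n>=1}, complex valued. *)
Definition actions (zeta : nat -> C) (n : nat) : R := (Cmod (zeta n)) ^ 2.

(* zeta in h^sigma_+  :  sum_{n>=1} n^{2 sigma} |zeta_n|^2 < oo,
   for sigma = 1/2 (i.e. u in L^2_{r,0}) and sigma = 3/2 (u in H^1_{r,0}). *)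
Definition in_h_half (zeta : nat -> C) : Prop :=
  ex_series (fun n => INR n * actions zeta n).
Definition in_h_3half (zeta : nat -> C) : Prop :=
  ex_series (fun n => INR n ^ 3 * actions zeta n).

(* BO flow in Birkhoff coordinates:
   zeta_n(S(t)u) = e^{i omega_n t} zeta_n(u), omega_n computed from the actions. *)
Definition BO_flow (zeta : nat -> C) (t : R) (n : nat) : C :=
  Cmult (cos (omega (actions zeta) n * t), sin (omega (actions zeta) n * t)) (zeta n).

Definition finite_gap (zeta : nat -> C) : Prop :=
  exists N : nat, forall n : nat, (N <= n)%nat -> zeta n = 0%C.

Definition Iso (gamma : nat -> R) (zeta : nat -> C) : Prop :=
  in_h_half zeta /\ forall n : nat, (1 <= n)%nat -> actions zeta n = gamma n.

From Stdlib Require Import Reals Lra Lia ZArith Classical ClassicalEpsilon.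
From Coquelicot Require Import Coquelicot.
Open Scope R_scope.

(* Write x = 1/b.  Squares are dense modulo 1 just below 1: a quadratic Dirichlet
   argument (pigeonhole on the partial sums of m_i^2 x for blocks m_i chosen so that
   (m_i + ... + m_j)^2 x is within an integer of m_i^2 x + ... + m_j^2 x) gives n with
   n^2 x arbitrarily close to an integer, and then a multiple k n puts the fractional
   part of (k n)^2 x just below 1, irrationality excluding the endpoints.  This yields
   n_0 < n_1 < ... whose fractional parts w_p of n_p^2 / b increase in (0,1).  With
   t_p = b (w_p - w_(p-1)) / (2 (n_p - n_(p-1))) and gamma_(n_p) = t_p - t_(p+1), one has
   sum_(r <= p) n_r gamma_(n_r) = b w_p / 2 - n_p t_(p+1) while the tail beyond n_p is
   t_(p+1), so omega_(n_p) = n_p^2 - b w_p lies in b Z.  Choosing each n_(p+1) large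
   makes t halve at every step, so sum n gamma_n <= b / 2, while
   n_(p+1)^3 gamma_(n_(p+1)) >= 1. *)

(** * Squares modulo one *)

Definition near_int (y e : R) : Prop := exists z : Z, Rabs (y - IZR z) <= e.

Lemma near_int_weaken y e e' : e <= e' -> near_int y e -> near_int y e'.
Proof. intros He [z Hz]. exists z. lra. Qed.

Lemma near_int_plus y1 y2 e1 e2 :
  near_int y1 e1 -> near_int y2 e2 -> near_int (y1 + y2) (e1 + e2).
Proof.
  intros [z1 H1] [z2 H2]. exists (z1 + z2)%Z. rewrite plus_IZR.
  replace (y1 + y2 - (IZR z1 + IZR z2)) with ((y1 - IZR z1) + (y2 - IZR z2)) by ring.
  eapply Rle_trans; [apply Rabs_triang | lra].
Qed.

Lemma near_int_scal (n : nat) y e : near_int y e -> near_int (INR n * y) (INR n * e).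
Proof.
  intros [z Hz]. exists (Z.of_nat n * z)%Z.
  rewrite mult_IZR, <- INR_IZR_INZ, <- Rmult_minus_distr_l, Rabs_mult.
  rewrite Rabs_right by (apply Rle_ge, pos_INR).
  apply Rmult_le_compat_l; [apply pos_INR | exact Hz].
Qed.

Lemma pigeonhole K (f : nat -> nat) :
  (forall i, (i <= K)%nat -> (f i < K)%nat) ->
  exists i j, (i < j <= K)%nat /\ f i = f j.
Proof.
  revert f; induction K as [|K IH]; intros f Hf.
  - specialize (Hf 0%nat (le_n 0)); lia.
  - destruct (classic (exists i, (i <= K)%nat /\ f i = f (S K))) as [[i [Hi Hei]]|Hno].
    { exists i, (S K); split; [lia | exact Hei]. }
    (* Redirect the value K to f (S K), which no f i with i <= K takes. *)
    set (f' := fun i => if Nat.eqb (f i) K then f (S K) else f i).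
    assert (Hf' : forall i, (i <= K)%nat -> (f' i < K)%nat).
    { intros i Hi. unfold f'. destruct (Nat.eqb_spec (f i) K) as [E|E].
      - assert (f (S K) <> K) by (intro E2; apply Hno; exists i; split; lia).
        specialize (Hf (S K) (le_n _)). lia.
      - specialize (Hf i ltac:(lia)). lia. }
    destruct (IH f' Hf') as [i [j [Hij Heq]]].
    exists i, j. split; [lia|]. unfold f' in Heq.
    destruct (Nat.eqb_spec (f i) K); destruct (Nat.eqb_spec (f j) K); try lia;
      exfalso; apply Hno; [exists j | exists i]; split; lia.
Qed.

Lemma near_int_pigeonhole K (s : nat -> R) : (1 <= K)%nat ->
  exists i j, (i < j <= K)%nat /\ near_int (s j - s i) (/ INR K).
Proof.
  intros HK.
  assert (HK0 : 0 < INR K) by (apply lt_0_INR; lia).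
  set (box := fun i => Int_part (INR K * frac_part (s i))).
  assert (Hbox : forall i, IZR (box i) <= INR K * frac_part (s i) < IZR (box i) + 1).
  { intro i. destruct (base_Int_part (INR K * frac_part (s i))). unfold box. lra. }
  assert (Hrange : forall i, (0 <= box i < Z.of_nat K)%Z).
  { intro i. destruct (base_fp (s i)). specialize (Hbox i). split.
    - assert (-1 < box i)%Z; [apply lt_IZR; nra | lia].
    - apply lt_IZR. rewrite <- INR_IZR_INZ. nra. }
  destruct (pigeonhole K (fun i => Z.to_nat (box i))) as [i [j [Hij Heq]]].
  { intros i _. destruct (Hrange i). lia. }
  assert (Ebox : box i = box j) by (destruct (Hrange i), (Hrange j); lia).
  exists i, j. split; [exact Hij|].
  exists (Int_part (s j) - Int_part (s i))%Z.
  rewrite minus_IZR.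
  replace (s j - s i - (IZR (Int_part (s j)) - IZR (Int_part (s i))))
    with (frac_part (s j) - frac_part (s i)) by (unfold frac_part; ring).
  pose proof (Hbox i). pose proof (Hbox j). rewrite Ebox in *.
  assert (Hd : Rabs (INR K * frac_part (s j) - INR K * frac_part (s i)) <= 1)
    by (apply Rabs_le; lra).
  replace (frac_part (s j) - frac_part (s i))
    with (/ INR K * (INR K * frac_part (s j) - INR K * frac_part (s i))) by (field; lra).
  rewrite Rabs_mult, Rabs_right by (apply Rle_ge, Rlt_le, Rinv_0_lt_compat, HK0).
  rewrite <- (Rmult_1_r (/ INR K)) at 2.
  apply Rmult_le_compat_l; [apply Rlt_le, Rinv_0_lt_compat, HK0 | exact Hd].
Qed.

Lemma dirichlet_approx x e : 0 < e -> exists m : nat, (1 <= m)%nat /\ near_int (INR m * x) e.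
Proof.
  intros He. destruct (archimed_cor1 e He) as [K [HKe HK]].
  destruct (near_int_pigeonhole K (fun i => INR i * x) HK) as [i [j [Hij Hn]]].
  exists (j - i)%nat. split; [lia|].
  rewrite minus_INR, Rmult_minus_distr_r by lia.
  apply (near_int_weaken _ _ _ (Rlt_le _ _ HKe) Hn).
Qed.

Fixpoint psum (m : nat -> nat) (n : nat) : nat :=
  match n with O => O | S n' => (psum m n' + m n')%nat end.

Lemma psum_ext m m' n : (forall l, (l < n)%nat -> m l = m' l) -> psum m n = psum m' n.
Proof.
  induction n as [|n IH]; intros H; simpl; [reflexivity|].
  rewrite IH, (H n); [reflexivity | lia | intros; apply H; lia].
Qed.

Lemma psum_mono m i j : (i <= j)%nat -> (psum m i <= psum m j)%nat.
Proof. induction 1; simpl; lia. Qed.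

Lemma approximating_blocks x eta : 0 < eta -> forall K, exists m : nat -> nat,
  (forall l, (1 <= m l)%nat) /\
  forall l, (l < K)%nat ->
    exists e, near_int (INR (m l) * x) e /\ 2 * INR (psum m l) * e <= eta.
Proof.
  intros Heta K. induction K as [|K [m [Hm1 Hm]]].
  { exists (fun _ => 1%nat). split; [lia | intros; lia]. }
  set (P := INR (psum m K)).
  assert (HP : 0 <= P) by apply pos_INR.
  set (e := eta / (2 * P + 1)).
  destruct (dirichlet_approx x e) as [mK [HmK Happ]].
  { apply Rdiv_lt_0_compat; lra. }
  exists (fun l => if (l <? K)%nat then m l else mK). split.
  { intro l. destruct (l <? K)%nat; auto. }
  assert (Hext : forall l, (l <= K)%nat ->
    psum (fun l => if (l <? K)%nat then m l else mK) l = psum m l).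
  { intros l Hl. apply psum_ext. intros i Hi.
    destruct (Nat.ltb_spec i K); [reflexivity | lia]. }
  intros l Hl. rewrite Hext by lia. destruct (Nat.ltb_spec l K) as [HlK|HlK].
  - apply Hm, HlK.
  - replace l with K by lia. exists e. split; [exact Happ|].
    fold P. unfold e. apply (Rmult_le_reg_r (2 * P + 1)); [lra|].
    field_simplify; [nra | lra].
Qed.

Lemma block_square_near_int x eta K (m : nat -> nat) :
  (forall l, (l < K)%nat ->
    exists e, near_int (INR (m l) * x) e /\ 2 * INR (psum m l) * e <= eta) ->
  forall i j, (i <= j <= K)%nat ->
  near_int ((INR (psum m j) - INR (psum m i)) ^ 2 * x
            - (INR (psum (fun l => (m l * m l)%nat) j) - INR (psum (fun l => (m l * m l)%nat) i)) * x)
           ((INR j - INR i) * eta).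
Proof.
  intros Hm i j [Hij HjK]. induction Hij as [|j Hij IH].
  { exists 0%Z. rewrite Rabs_right; [right; ring | right; ring]. }
  destruct (Hm j) as [e [He Hbound]]; [lia|].
  assert (HB : INR (psum m j) - INR (psum m i) = INR (psum m j - psum m i))
    by (rewrite minus_INR; [reflexivity | apply psum_mono, Hij]).
  assert (HBle : INR (psum m j - psum m i) <= INR (psum m j))
    by (apply le_INR; lia).
  set (sq := psum (fun l => (m l * m l)%nat)) in *.
  (* (B + m_j)^2 = B^2 + m_j^2 + 2 B m_j, and 2 B m_j x is near an integer. *)
  assert (Hstep := near_int_plus _ _ _ _ (IH ltac:(lia))
                     (near_int_scal (2 * (psum m j - psum m i)) _ _ He)).
  assert (He0 : 0 <= e) by (destruct He as [z Hz]; pose proof (Rabs_pos (INR (m j) * x - IZR z)); lra).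
  match goal with |- near_int ?y _ => replace y with
    (((INR (psum m j) - INR (psum m i)) ^ 2 * x - (INR (sq j) - INR (sq i)) * x)
     + INR (2 * (psum m j - psum m i)) * (INR (m j) * x)) end.
  2:{ unfold sq; simpl psum. rewrite !plus_INR, !mult_INR, <- HB. simpl. ring. }
  eapply near_int_weaken; [| exact Hstep].
  rewrite mult_INR, (S_INR j). change (INR 2) with 2. nra.
Qed.

Lemma square_near_int x eps : 0 < eps ->
  exists n : nat, (1 <= n)%nat /\ near_int (INR n ^ 2 * x) eps.
Proof.
  intros Heps.
  destruct (archimed_cor1 (eps / 2)) as [K [HKe HK]]; [lra|].
  assert (HK0 : 0 < INR K) by (apply lt_0_INR; lia).
  set (eta := eps / (2 * INR K)).
  assert (Heta : 0 < eta) by (unfold eta; apply Rdiv_lt_0_compat; lra).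
  destruct (approximating_blocks x eta Heta K)
    as [m [Hm1 Hm]].
  set (sq := psum (fun l => (m l * m l)%nat)).
  destruct (near_int_pigeonhole K (fun i => INR (sq i) * x) HK) as [i [j [Hij Hpig]]].
  pose proof (block_square_near_int x eta K m Hm i j ltac:(lia)) as Hblock.
  exists (psum m j - psum m i)%nat. split.
  { assert (psum m (S i) <= psum m j)%nat by (apply psum_mono; lia).
    specialize (Hm1 i). simpl in *. lia. }
  assert (Hlen : (INR j - INR i) * eta <= eps / 2).
  { assert (INR j - INR i <= INR K) by (pose proof (le_INR j K ltac:(lia)); pose proof (pos_INR i); lra).
    apply (Rle_trans _ (INR K * eta)); [apply Rmult_le_compat_r; [apply Rlt_le|]; auto|].
    right. unfold eta. field. lra. }
  rewrite minus_INR by (apply psum_mono; lia).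
  replace ((INR (psum m j) - INR (psum m i)) ^ 2 * x) with
    (((INR (psum m j) - INR (psum m i)) ^ 2 * x - (INR (sq j) - INR (sq i)) * x)
     + (INR (sq j) * x - INR (sq i) * x)) by ring.
  apply (near_int_weaken _ ((INR j - INR i) * eta + / INR K)); [lra|].
  exact (near_int_plus _ _ _ _ Hblock Hpig).
Qed.

Lemma nat_crossing (P : nat -> Prop) K : P K -> ~ P 0%nat -> exists k, ~ P k /\ P (S k).
Proof.
  induction K as [|K IH]; intros HK H0; [contradiction|].
  destruct (classic (P K)); [apply IH; auto | exists K; auto].
Qed.

Lemma square_crossing y d : 0 < y <= d ^ 2 -> 0 < d <= 1 ->
  exists k : nat, INR k ^ 2 * y < 1 <= INR (S k) ^ 2 * y /\
    INR (S k) ^ 2 * y - INR k ^ 2 * y < 3 * d /\ 1 <= INR (S k) * d.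
Proof.
  intros [Hy Hyd] Hd.
  destruct (INR_unbounded (/ y)) as [K HK].
  assert (HyK : 1 < INR K * y).
  { apply (Rmult_lt_compat_r y) in HK; [|lra]. rewrite Rinv_l in HK; lra. }
  destruct (nat_crossing (fun k => 1 <= INR k ^ 2 * y) K) as [k [Hk HSk]].
  { pose proof (pos_INR K). simpl. nra. }
  { simpl. lra. }
  apply Rnot_le_lt in Hk. pose proof (pos_INR k) as Hk0.
  exists k. rewrite S_INR in *. split; [lra|]. split.
  - (* ((2k+1) y)^2 < 9 y <= (3 d)^2 *)
    assert (Hsq : ((2 * INR k + 1) * y) ^ 2 < (3 * d) ^ 2).
    { assert (y <= 1) by (simpl in Hyd; nra).
      assert (y * y <= y) by nra.
      destruct (Rle_lt_dec 1 (INR k)) as [Hk1|Hk1].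
      - assert ((2 * INR k + 1) ^ 2 <= 9 * INR k ^ 2) by nra.
        assert (INR k ^ 2 * y * y < y) by nra.
        nra.
      - assert (INR k = 0)
          by (destruct k; [reflexivity | rewrite S_INR in Hk1; pose proof (pos_INR k); lra]).
        nra. }
    destruct (Rlt_or_le ((2 * INR k + 1) * y) (3 * d)) as [|Hge]; [nra|].
    assert (H3d : 0 <= 3 * d) by lra. pose proof (pow_incr _ _ 2 (conj H3d Hge)). lra.
  - nra.
Qed.

Lemma irrational_inv_nat_mult b : irrational b ->
  forall (q : nat) (p : Z), (1 <= q)%nat -> INR q * / b <> IZR p.
Proof.
  intros Hirr q p Hq E. apply Hirr.
  assert (Hq0 : 0 < INR q) by (apply lt_0_INR; lia).
  destruct (Req_dec b 0) as [Hb|Hb].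
  { exists 0%Z, 1%Z. split; [lia|]. rewrite Hb. field. }
  assert (Hp : IZR p <> 0).
  { rewrite <- E. apply Rmult_integral_contrapositive. split; [lra | apply Rinv_neq_0_compat, Hb]. }
  exists (Z.of_nat q), p. split; [intro H; apply Hp; rewrite H; reflexivity|].
  rewrite <- INR_IZR_INZ, <- E. field. split; [exact Hb | lra].
Qed.

Section Square_fractional_parts.

Variable x : R.
Hypothesis x_irrational : forall (q : nat) (p : Z), (1 <= q)%nat -> INR q * x <> IZR p.

Lemma square_multiple_frac_near_one (m : nat) (z0 : Z) d :
  (1 <= m)%nat -> 0 < d <= 1 -> Rabs (INR m ^ 2 * x - IZR z0) <= d ^ 2 ->
  exists (k : nat) (z : Z),
    1 <= (INR k + 1) * d /\ 1 - 3 * d < INR (k * m) ^ 2 * x - IZR z < 1.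
Proof.
  intros Hm Hd Hz0.
  set (y := INR m ^ 2 * x - IZR z0) in *.
  assert (Hy0 : y <> 0).
  { intro E. apply (x_irrational (m * m) z0); [lia|].
    rewrite mult_INR. unfold y in E. simpl in E. lra. }
  apply Rabs_le_between in Hz0.
  destruct (Rlt_or_le 0 y) as [Hyp|Hyn].
  - (* (k m)^2 x = k^2 z0 + k^2 y with k^2 y just below 1 *)
    destruct (square_crossing y d ltac:(lra) Hd) as [k [[Hk1 Hk2] [Hgap Hkd]]].
    rewrite S_INR in *.
    exists k, (Z.of_nat (k * k) * z0)%Z. split; [exact Hkd|].
    rewrite mult_IZR, <- INR_IZR_INZ, !mult_INR.
    replace ((INR k * INR m) ^ 2 * x - _) with (INR k ^ 2 * y) by (unfold y; ring). lra.
  - (* ((k+1) m)^2 x = (k+1)^2 z0 - (k+1)^2 |y| with (k+1)^2 |y| just above 1 *)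
    destruct (square_crossing (- y) d ltac:(lra) Hd) as [k [[Hk1 Hk2] [Hgap Hkd]]].
    assert (Hne : INR (S k) ^ 2 * - y <> 1).
    { intro E. apply (x_irrational (S k * S k * (m * m)) (Z.of_nat (S k * S k) * z0 - 1)); [lia|].
      rewrite minus_IZR, mult_IZR, <- INR_IZR_INZ, !mult_INR.
      unfold y in E. simpl in *. lra. }
    exists (S k), (Z.of_nat (S k * S k) * z0 - 2)%Z. split.
    { pose proof (pos_INR (S k)). lra. }
    rewrite minus_IZR, mult_IZR, <- INR_IZR_INZ, !mult_INR.
    replace ((INR (S k) * INR m) ^ 2 * x - _) with (2 - INR (S k) ^ 2 * - y)
      by (unfold y; simpl; ring).
    destruct Hk2 as [Hk2 | Hk2]; [lra | exfalso; apply Hne; symmetry; exact Hk2].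
Qed.

Lemma square_frac_above (v : R) (N : nat) : 0 <= v < 1 ->
  exists (n : nat) (z : Z), (N < n)%nat /\ v < INR n ^ 2 * x - IZR z < 1.
Proof.
  intros Hv.
  assert (HN : 0 < INR (N + 2)) by (apply lt_0_INR; lia).
  set (d := Rmin ((1 - v) / 3) (/ INR (N + 2))).
  assert (Hd1 : d <= (1 - v) / 3) by apply Rmin_l.
  assert (Hd2 : d <= / INR (N + 2)) by apply Rmin_r.
  assert (Hd0 : 0 < d) by (apply Rmin_pos; [lra | apply Rinv_0_lt_compat, HN]).
  destruct (square_near_int x (d ^ 2) ltac:(nra)) as [m [Hm [z0 Hz0]]].
  destruct (square_multiple_frac_near_one m z0 d Hm ltac:(lra) Hz0)
    as [k [z [Hkd Hfrac]]].
  exists (k * m)%nat, z. split; [|lra].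
  (* (k + 1) d >= 1 and d <= 1 / (N + 2) force k > N *)
  assert (HkN : INR (N + 2) <= INR k + 1).
  { apply (Rmult_le_reg_r d); [exact Hd0|].
    apply (Rmult_le_compat_l (INR (N + 2))) in Hd2; [|lra].
    rewrite Rinv_r in Hd2 by lra. nra. }
  rewrite plus_INR in HkN. change (INR 2) with 2 in HkN.
  assert (HNk : INR N < INR k) by lra. apply INR_lt in HNk. nia.
Qed.

End Square_fractional_parts.

(** * The sequence n_p *)

Definition square_frac (b : R) (n : nat) (w : R) : Prop :=
  exists z : Z, INR n ^ 2 / b - IZR z = w.

Lemma square_frac_step b n w t : 0 < b -> irrational b -> 0 <= w < 1 -> 0 < t ->
  exists n' w', (n < n')%nat /\ square_frac b n' w' /\ w < w' < 1 /\
    b * (w' - w) / (2 * (INR n' - INR n)) <= t / 2 /\ 4 / b <= INR n' ^ 2 * (w' - w).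
Proof.
  intros Hb Hirr Hw Ht.
  destruct (INR_unbounded (b / t + 8 / (b * (1 - w)))) as [M HM].
  destruct (square_frac_above (/ b) (irrational_inv_nat_mult b Hirr) ((1 + w) / 2) (n + M))
    as [n' [z [Hn' Hw']]]; [lra|].
  exists n', (INR n' ^ 2 * / b - IZR z).
  set (w' := INR n' ^ 2 * / b - IZR z) in *.
  assert (Hnn' : INR n + INR M < INR n') by (rewrite <- plus_INR; apply lt_INR, Hn').
  assert (Hbt : 0 < b / t) by (apply Rdiv_lt_0_compat; lra).
  assert (H8 : 0 < 8 / (b * (1 - w))) by (apply Rdiv_lt_0_compat; nra).
  pose proof (pos_INR n).
  split; [lia|]. split; [exists z; reflexivity|]. split; [split; lra|]. split.
  - (* n' - n > b / t, and w' - w < 1 *)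
    assert (Hd : b < (INR n' - INR n) * t) by (apply Rlt_div_l; lra).
    apply Rle_div_l; [lra|]. nra.
  - (* n'^2 >= n' > 8 / (b (1 - w)), and w' - w > (1 - w) / 2 *)
    assert (Hn8 : 8 < INR n' * (b * (1 - w))) by (apply Rlt_div_l; nra).
    assert (1 <= INR n') by (apply (le_INR 1); lia).
    assert (INR n' <= INR n' ^ 2) by (simpl; nra).
    assert (0 <= (INR n' ^ 2 - INR n') * ((w' - w) * b)) by (apply Rmult_le_pos; nra).
    assert (0 <= INR n' * b * (2 * (w' - w) - (1 - w))) by (apply Rmult_le_pos; nra).
    apply Rle_div_l; [lra|]. nra.
Qed.

Record stage := { stage_n : nat; stage_w : R; stage_t : R }.

Definition stage_ok (b : R) (s : stage) : Prop :=
  (1 <= stage_n s)%nat /\ 0 < stage_w s < 1 /\ square_frac b (stage_n s) (stage_w s) /\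
  0 < stage_t s.

Definition next_stage (b : R) (s s' : stage) : Prop :=
  (stage_n s < stage_n s')%nat /\
  stage_t s' = b * (stage_w s' - stage_w s) / (2 * (INR (stage_n s') - INR (stage_n s))) /\
  stage_t s' <= stage_t s / 2 /\
  4 / b <= INR (stage_n s') ^ 2 * (stage_w s' - stage_w s).

Lemma next_stage_exists b s : 0 < b -> irrational b -> stage_ok b s ->
  exists s', stage_ok b s' /\ next_stage b s s'.
Proof.
  intros Hb Hirr (Hn & Hw & _ & Ht).
  destruct (square_frac_step b (stage_n s) (stage_w s) (stage_t s) Hb Hirr ltac:(lra) Ht)
    as [n' [w' (Hn' & Hfrac & Hw' & Ht' & Hgap)]].
  set (t' := b * (w' - stage_w s) / (2 * (INR n' - INR (stage_n s)))).
  exists {| stage_n := n'; stage_w := w'; stage_t := t' |}.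
  unfold stage_ok, next_stage; simpl.
  assert (INR (stage_n s) < INR n') by (apply lt_INR, Hn').
  repeat split; try lia; try lra; try assumption.
  unfold t'. apply Rdiv_lt_0_compat; nra.
Qed.

Lemma dependent_choice_seq {A : Type} (P : A -> Prop) (Rel : A -> A -> Prop) (a0 : A) :
  P a0 -> (forall a, P a -> exists a', P a' /\ Rel a a') ->
  exists f : nat -> A, f 0%nat = a0 /\ forall p, P (f p) /\ Rel (f p) (f (S p)).
Proof.
  intros H0 Hstep.
  assert (Hsel : forall a, {a' | P a -> P a' /\ Rel a a'}).
  { intro a. apply constructive_indefinite_description.
    destruct (classic (P a)) as [Ha|Ha].
    - destruct (Hstep a Ha) as [a' Ha']. exists a'. auto.
    - exists a. tauto. }
  destruct (dependent_choice Hsel a0) as [f [Hf0 Hf]].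
  assert (HP : forall p, P (f p)).
  { induction p; [rewrite Hf0; exact H0 | apply (Hf p IHp)]. }
  exists f. split; [exact Hf0 | intro p; split; [apply HP | apply (Hf p (HP p))]].
Qed.

Lemma square_frac_sequences b : 0 < b -> irrational b ->
  exists (np : nat -> nat) (w t : nat -> R),
    (1 <= np 0)%nat /\
    (forall p, (np p < np (S p))%nat) /\
    (forall p, square_frac b (np p) (w p)) /\
    (forall p, w p <= 1) /\
    (forall p, 0 < t p) /\
    (forall p, t (S p) <= t p / 2) /\
    t 0%nat = b * w 0%nat / (2 * INR (np 0%nat)) /\
    (forall p, t (S p) = b * (w (S p) - w p) / (2 * (INR (np (S p)) - INR (np p)))) /\
    (forall p, 4 / b <= INR (np (S p)) ^ 2 * (w (S p) - w p)).
Proof.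
  intros Hb Hirr.
  destruct (square_frac_above (/ b) (irrational_inv_nat_mult b Hirr) 0 0 ltac:(lra))
    as [n0 [z0 [Hn0 Hw0]]].
  set (w0 := INR n0 ^ 2 * / b - IZR z0) in *.
  assert (Hn0R : 0 < INR n0) by (apply lt_0_INR; lia).
  set (s0 := {| stage_n := n0; stage_w := w0; stage_t := b * w0 / (2 * INR n0) |}).
  assert (Hs0 : stage_ok b s0).
  { unfold stage_ok, s0; simpl. split; [lia|]. split; [lra|].
    split; [exists z0; reflexivity | apply Rdiv_lt_0_compat; nra]. }
  destruct (dependent_choice_seq (stage_ok b) (next_stage b) s0 Hs0
              (fun s => next_stage_exists b s Hb Hirr)) as [f [Hf0 Hf]].
  exists (fun p => stage_n (f p)), (fun p => stage_w (f p)), (fun p => stage_t (f p)).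
  rewrite Hf0. simpl.
  split; [lia|].
  repeat split; intro p; destruct (Hf p) as [(Hn & Hw & Hfrac & Ht) (Hn' & Ht' & Hhalf & Hgap)];
    solve [assumption | lra].
Qed.

(** * Sequences supported on a subsequence *)

(* Equations between Coquelicot sums are typed in an [AbelianMonoid]; [ring] and
   [field] need them retyped at [R]. *)
Ltac R_eq := match goal with |- ?a = ?b => change (@eq R a b) end.

Section Sparse_sequences.

Variable np : nat -> nat.
Hypothesis np_incr : forall p, (np p < np (S p))%nat.

Lemma np_le p q : (p <= q)%nat -> (np p <= np q)%nat.
Proof. induction 1 as [|q _ IH]; [lia | specialize (np_incr q); lia]. Qed.

Lemma np_lt p q : (p < q)%nat -> (np p < np q)%nat.
Proof. intros H. pose proof (np_incr p). pose proof (np_le (S p) q H). lia. Qed.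

Lemma np_ge p : (p <= np p)%nat.
Proof. induction p as [|p IH]; [lia | specialize (np_incr p); lia]. Qed.

Lemma np_inj p q : np p = np q -> p = q.
Proof.
  intros E. destruct (Nat.lt_trichotomy p q) as [H|[H|H]]; auto;
    apply np_lt in H; lia.
Qed.

Definition sparse (g : nat -> R) (n : nat) : R :=
  match excluded_middle_informative (exists p, np p = n) with
  | left H => g (proj1_sig (constructive_indefinite_description _ H))
  | right _ => 0
  end.

Lemma sparse_at g p : sparse g (np p) = g p.
Proof.
  unfold sparse. destruct (excluded_middle_informative _) as [H|H].
  - destruct (constructive_indefinite_description _ H) as [q Hq]. simpl.
    apply np_inj in Hq. subst. reflexivity.
  - exfalso. apply H. exists p. reflexivity.
Qed.

Lemma sparse_off g n : (forall p, n <> np p) -> sparse g n = 0.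
Proof.
  intros Hn. unfold sparse. destruct (excluded_middle_informative _) as [[p Hp]|]; auto.
  exfalso. apply (Hn p). auto.
Qed.

Lemma sum_n_gap (a : nat -> R) m n :
  (forall k, (m < k < n)%nat -> a k = 0) -> (m < n)%nat -> sum_n a n = sum_n a m + a n.
Proof.
  intros Ha Hmn. induction Hmn as [|n Hmn IH]; [rewrite sum_Sn; reflexivity|].
  rewrite sum_Sn, IH, (Ha n) by (first [lia | intros; apply Ha; lia]).
  rewrite Rplus_0_r. reflexivity.
Qed.

Lemma sum_n_zero_prefix (a : nat -> R) n :
  (forall k, (k < n)%nat -> a k = 0) -> sum_n a n = a n.
Proof.
  induction n as [|n IH]; intros Ha; [apply sum_O|].
  rewrite sum_Sn, IH, (Ha n) by (first [lia | intros; apply Ha; lia]).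
  apply Rplus_0_l.
Qed.

Lemma sum_n_sparse (a : nat -> R) :
  (forall n, (forall p, n <> np p) -> a n = 0) ->
  forall p, sum_n a (np p) = sum_n (fun r => a (np r)) p.
Proof.
  intros Ha p. induction p as [|p IH].
  - rewrite sum_O. apply sum_n_zero_prefix.
    intros k Hk. apply Ha. intros q ->. pose proof (np_le 0 q). lia.
  - rewrite sum_Sn, <- IH. apply sum_n_gap; [|apply np_incr].
    intros k Hk. apply Ha. intros q ->.
    destruct (Nat.le_gt_cases q p) as [Hq|Hq].
    + pose proof (np_le q p Hq). lia.
    + pose proof (np_le (S p) q Hq). lia.
Qed.

Lemma sum_n_nonneg_mono (a : nat -> R) N M :
  (forall n, 0 <= a n) -> (N <= M)%nat -> sum_n a N <= sum_n a M.
Proof.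
  intros Ha H. induction H as [|M _ IH]; [lra|].
  rewrite sum_Sn. specialize (Ha (S M)). change (plus ?x ?y) with (x + y). lra.
Qed.

Lemma ex_series_of_bounded_subsums (a : nat -> R) M :
  (forall n, 0 <= a n) -> (forall p, sum_n a (np p) <= M) -> ex_series a.
Proof.
  intros Ha HM.
  destruct (ex_finite_lim_seq_incr (sum_n a) M) as [l Hl].
  - intro n. apply sum_n_nonneg_mono; auto.
  - intro N. eapply Rle_trans; [apply sum_n_nonneg_mono, np_ge; exact Ha | apply HM].
  - exists l. exact Hl.
Qed.

Lemma is_series_of_subsums (a : nat -> R) (l : R) :
  (forall n, 0 <= a n) -> is_lim_seq (fun p => sum_n a (np p)) l -> is_series a l.
Proof.
  intros Ha Hl.
  assert (Hbound : forall p, sum_n a (np p) <= l).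
  { apply is_lim_seq_incr_compare; [exact Hl|].
    intro p. apply sum_n_nonneg_mono; [exact Ha | apply Nat.lt_le_incl, np_incr]. }
  destruct (ex_series_of_bounded_subsums a l Ha Hbound) as [l' Hl'].
  replace l with l'; [exact Hl'|].
  assert (Hsub := is_lim_seq_subseq (sum_n a) l' np (eventually_subseq np np_incr) Hl').
  apply is_lim_seq_unique in Hl, Hsub. rewrite Hl in Hsub. now injection Hsub.
Qed.

Lemma subsums_diverge_not_ex_series (a : nat -> R) :
  is_lim_seq (fun p => sum_n a (np p)) p_infty -> ~ ex_series a.
Proof.
  intros Hinf [l Hl].
  assert (Hsub := is_lim_seq_subseq (sum_n a) l np (eventually_subseq np np_incr) Hl).
  apply is_lim_seq_unique in Hinf, Hsub. rewrite Hinf in Hsub. discriminate.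
Qed.

End Sparse_sequences.

(** * The actions gamma *)

Section Telescoping_actions.

Variables (b : R) (np : nat -> nat) (w t : nat -> R).
Hypothesis b_pos : 0 < b.
Hypothesis np_ge1 : (1 <= np 0)%nat.
Hypothesis np_incr : forall p, (np p < np (S p))%nat.
Hypothesis w_frac : forall p, square_frac b (np p) (w p).
Hypothesis w_le1 : forall p, w p <= 1.
Hypothesis t_pos : forall p, 0 < t p.
Hypothesis t_halves : forall p, t (S p) <= t p / 2.
Hypothesis t_0 : t 0%nat = b * w 0%nat / (2 * INR (np 0%nat)).
Hypothesis t_S : forall p,
  t (S p) = b * (w (S p) - w p) / (2 * (INR (np (S p)) - INR (np p))).
Hypothesis gap_large : forall p, 4 / b <= INR (np (S p)) ^ 2 * (w (S p) - w p).

Definition telescoped := sparse np (fun p => t p - t (S p)).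

Lemma np_INR_ge1 p : 1 <= INR (np p).
Proof.
  apply (le_INR 1). destruct p as [|p]; [exact np_ge1|].
  pose proof (np_lt np np_incr 0 (S p)). lia.
Qed.

Lemma telescoped_at p : telescoped (np p) = t p - t (S p).
Proof. apply (sparse_at np np_incr). Qed.

Lemma telescoped_off n : (forall p, n <> np p) -> telescoped n = 0.
Proof. apply sparse_off. Qed.

Lemma telescoped_at_pos p : 0 < telescoped (np p).
Proof. rewrite telescoped_at. specialize (t_halves p). specialize (t_pos p). lra. Qed.

Lemma telescoped_nonneg n : 0 <= telescoped n.
Proof.
  destruct (classic (exists p, n = np p)) as [[p ->]|Hn].
  - apply Rlt_le, telescoped_at_pos.
  - rewrite telescoped_off; [lra|]. intros p E. apply Hn. exists p. exact E.
Qed.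

Lemma sum_n_telescoped_weighted (F : nat -> R) p :
  sum_n (fun n => F n * telescoped n) (np p) = sum_n (fun r => F (np r) * (t r - t (S r))) p.
Proof.
  rewrite (sum_n_sparse np np_incr).
  - apply sum_n_ext. intro r. rewrite telescoped_at. reflexivity.
  - intros n Hn. rewrite telescoped_off by exact Hn. apply Rmult_0_r.
Qed.

Lemma sum_telescoped p : sum_n telescoped (np p) = t 0%nat - t (S p).
Proof.
  rewrite (sum_n_ext _ (fun n => 1 * telescoped n)) by (intro; symmetry; apply Rmult_1_l).
  rewrite sum_n_telescoped_weighted.
  induction p as [|p IH]; rewrite ?sum_O, ?sum_Sn, ?IH; change (plus ?x ?y) with (x + y);
    R_eq; ring.
Qed.

Lemma sum_telescoped_weighted p :
  sum_n (fun n => INR n * telescoped n) (np p) = b * w p / 2 - INR (np p) * t (S p).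
Proof.
  rewrite sum_n_telescoped_weighted.
  induction p as [|p IH].
  - rewrite sum_O, t_0. pose proof (np_INR_ge1 0). R_eq. field. lra.
  - rewrite sum_Sn, IH, (t_S p). change (plus ?x ?y) with (x + y).
    pose proof (lt_INR _ _ (np_incr p)). R_eq. field. lra.
Qed.

Lemma t_to_0 : is_lim_seq t 0.
Proof.
  apply (is_lim_seq_le_le (fun _ => 0) t (fun p => t 0%nat * (/ 2) ^ p)).
  - intro p. split; [apply Rlt_le, t_pos|].
    induction p as [|p IH]; [simpl; lra|]. specialize (t_halves p). simpl. lra.
  - apply is_lim_seq_const.
  - replace (Finite 0) with (Finite (t 0%nat * 0)) by (f_equal; ring).
    apply is_lim_seq_mult'; [apply is_lim_seq_const | apply is_lim_seq_geom].
    rewrite Rabs_right; lra.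
Qed.

Lemma is_series_telescoped : is_series telescoped (t 0%nat).
Proof.
  apply (is_series_of_subsums np np_incr); [exact telescoped_nonneg|].
  apply (is_lim_seq_ext (fun p => t 0%nat - t (S p))); [intro p; symmetry; apply sum_telescoped|].
  replace (Finite (t 0%nat)) with (Rbar_minus (t 0%nat) 0) by (simpl; f_equal; ring).
  apply is_lim_seq_minus'; [apply is_lim_seq_const | apply (is_lim_seq_incr_1 t 0), t_to_0].
Qed.

Lemma telescoped_tail p : Series (fun j => telescoped (np p + 1 + j)) = t (S p).
Proof.
  apply is_series_unique, is_series_incr_n; [lia|].
  replace (Init.Nat.pred (np p + 1)) with (np p) by lia.
  rewrite sum_telescoped. change (plus ?x ?y) with (x + y).
  replace (t (S p) + (t 0%nat - t (S p))) with (t 0%nat) by ring.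
  exact is_series_telescoped.
Qed.

Lemma omega_telescoped p : exists z : Z, omega telescoped (np p) = b * IZR z.
Proof.
  destruct (w_frac p) as [z Hz]. exists z.
  unfold omega. rewrite telescoped_tail.
  assert (Hsplit : sum_n_m (fun k => INR k * telescoped k) 1 (np p)
    = sum_n (fun k => INR k * telescoped k) (np p) - sum_n (fun k => INR k * telescoped k) 0)
    by exact (sum_n_m_sum_n (fun k => INR k * telescoped k) 0 (np p) ltac:(lia)).
  rewrite Hsplit, sum_telescoped_weighted, sum_O, <- Hz. simpl. field. lra.
Qed.

Lemma ex_series_telescoped_weighted : ex_series (fun n => INR n * telescoped n).
Proof.
  apply (ex_series_of_bounded_subsums np np_incr _ (b / 2)).
  - intro n. apply Rmult_le_pos; [apply pos_INR | apply telescoped_nonneg].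
  - intro p. rewrite sum_telescoped_weighted.
    pose proof (np_INR_ge1 p). specialize (t_pos (S p)). specialize (w_le1 p). nra.
Qed.

Lemma cube_telescoped_ge1 p : 1 <= INR (np (S p)) ^ 3 * telescoped (np (S p)).
Proof.
  set (n' := INR (np (S p))). set (n := INR (np p)).
  assert (Hnn' : n < n') by apply lt_INR, np_incr.
  assert (Hn0 : 0 <= n) by apply pos_INR.
  assert (Hgap : 4 <= n' ^ 2 * (w (S p) - w p) * b) by (apply Rle_div_l; [lra | apply gap_large]).
  (* n'^3 t_{p+1} = n' * n'^2 b (w_{p+1} - w_p) / (2 (n' - n)) >= 2 since n' >= n' - n *)
  assert (Ht : 2 <= n' ^ 3 * t (S p)).
  { rewrite t_S. fold n n'. unfold Rdiv.
    replace (n' ^ 3 * (b * (w (S p) - w p) * / (2 * (n' - n))))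
      with (n' * (n' ^ 2 * (w (S p) - w p) * b) / (2 * (n' - n))) by (field; lra).
    apply Rle_div_r; [lra | nra]. }
  rewrite telescoped_at. specialize (t_halves (S p)).
  assert (0 < n' ^ 3) by (apply pow_lt; lra). nra.
Qed.

Lemma cube_sums_diverge :
  is_lim_seq (sum_n (fun p => INR (np p) ^ 3 * telescoped (np p))) p_infty.
Proof.
  apply (is_lim_seq_le_p_loc INR); [|apply is_lim_seq_INR].
  exists 0%nat. intros p _. induction p as [|p IH].
  - rewrite sum_O. change (INR 0) with 0. pose proof (np_INR_ge1 0).
    apply Rmult_le_pos; [apply pow_le; lra | apply telescoped_nonneg].
  - rewrite sum_Sn, S_INR. pose proof (cube_telescoped_ge1 p).
    change (plus ?x ?y) with (x + y). lra.
Qed.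

End Telescoping_actions.

(** * The isoset in Birkhoff coordinates *)

Lemma omega_ext f h : (forall n, (1 <= n)%nat -> f n = h n) -> forall n, omega f n = omega h n.
Proof.
  intros H n. unfold omega.
  rewrite (sum_n_m_ext_loc (fun k => INR k * f k) (fun k => INR k * h k))
    by (intros k Hk; rewrite H by lia; reflexivity).
  rewrite (Series_ext (fun j => f (n + 1 + j)%nat) (fun j => h (n + 1 + j)%nat))
    by (intro j; apply H; lia).
  reflexivity.
Qed.

Lemma omega_0 f : omega f 0 = 0.
Proof.
  unfold omega. rewrite sum_n_m_zero by lia. change (@zero R_AbelianMonoid) with 0. simpl. ring.
Qed.

Lemma cos_sin_period_Z x (z : Z) :
  cos (x + 2 * IZR z * PI) = cos x /\ sin (x + 2 * IZR z * PI) = sin x.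
Proof.
  destruct z as [|p|p].
  - rewrite Rmult_0_r, Rmult_0_l, Rplus_0_r. auto.
  - rewrite <- (positive_nat_Z p), <- INR_IZR_INZ. split; [apply cos_period | apply sin_period].
  - rewrite <- Pos2Z.opp_pos, opp_IZR, <- (positive_nat_Z p), <- INR_IZR_INZ.
    set (y := x + 2 * - INR (Pos.to_nat p) * PI).
    replace x with (y + 2 * INR (Pos.to_nat p) * PI) by (unfold y; ring).
    rewrite cos_period, sin_period. auto.
Qed.

Lemma Cmod_real_sqrt_sq y : 0 <= y -> Cmod (sqrt y, 0) ^ 2 = y.
Proof.
  intros Hy. unfold Cmod. simpl fst; simpl snd.
  rewrite pow2_sqrt by (apply Rplus_le_le_0_compat; apply pow2_ge_0).
  rewrite pow_i, Rplus_0_r by lia. apply pow2_sqrt, Hy.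
Qed.

Lemma actions_eq_0 zeta n : actions zeta n = 0 -> zeta n = 0%C.
Proof.
  unfold actions. intros E. apply Cmod_eq_0.
  destruct (Req_dec (Cmod (zeta n)) 0) as [|Hne]; [assumption|].
  exfalso. exact (pow_nonzero _ 2 Hne E).
Qed.

Lemma BO_flow_periodic_at b zeta n (z : Z) : 0 < b ->
  omega (actions zeta) n = b * IZR z ->
  forall t, BO_flow zeta (t + 2 * PI / b) n = BO_flow zeta t n.
Proof.
  intros Hb Hz t. unfold BO_flow. rewrite Hz.
  replace (b * IZR z * (t + 2 * PI / b)) with (b * IZR z * t + 2 * IZR z * PI) by (field; lra).
  destruct (cos_sin_period_Z (b * IZR z * t) z) as [-> ->]. reflexivity.
Qed.

Section Isoset.

Variables (gamma : nat -> R) (zeta : nat -> C).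
Hypothesis zeta_Iso : Iso gamma zeta.

Lemma Iso_not_in_h_3half (np : nat -> nat) :
  (forall p, (np p < np (S p))%nat) ->
  (forall n, (forall p, n <> np p) -> gamma n = 0) ->
  is_lim_seq (sum_n (fun p => INR (np p) ^ 3 * gamma (np p))) p_infty ->
  ~ in_h_3half zeta.
Proof.
  intros Hinc Hoff Hdiv Hh. destruct zeta_Iso as [_ Hact].
  apply (subsums_diverge_not_ex_series np Hinc (fun n => INR n ^ 3 * gamma n)).
  - apply (is_lim_seq_ext (sum_n (fun p => INR (np p) ^ 3 * gamma (np p)))); [|exact Hdiv].
    intro p. symmetry. apply (sum_n_sparse np Hinc).
    intros n Hn. rewrite Hoff by exact Hn. apply Rmult_0_r.
  - apply (ex_series_ext (fun n => INR n ^ 3 * actions zeta n)); [|exact Hh].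
    intros [|n]; [simpl; ring | rewrite Hact by lia; reflexivity].
Qed.

Lemma Iso_BO_flow_periodic b (np : nat -> nat) : 0 < b ->
  (forall n, (forall p, n <> np p) -> gamma n = 0) ->
  (forall p, exists z : Z, omega gamma (np p) = b * IZR z) ->
  forall t n, BO_flow zeta (t + 2 * PI / b) n = BO_flow zeta t n.
Proof.
  intros Hb Hoff Homega t n. destruct zeta_Iso as [_ Hact].
  destruct n as [|n].
  { apply (BO_flow_periodic_at b zeta 0 0 Hb). rewrite omega_0. ring. }
  destruct (classic (exists p, np p = S n)) as [[p Hp]|Hno].
  - destruct (Homega p) as [z Hz]. apply (BO_flow_periodic_at b zeta _ z Hb).
    rewrite (omega_ext _ gamma) by exact Hact. rewrite <- Hp. exact Hz.
  - unfold BO_flow. rewrite actions_eq_0, !Cmult_0_r; [reflexivity|].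
    rewrite Hact, Hoff by (lia || (intros p E; apply Hno; exists p; auto)). reflexivity.
Qed.

Lemma Iso_not_finite_gap (np : nat -> nat) :
  (forall p, (np p < np (S p))%nat) -> (forall p, 0 < gamma (np p)) -> ~ finite_gap zeta.
Proof.
  intros Hinc Hpos [N HN]. destruct zeta_Iso as [_ Hact].
  pose proof (np_ge np Hinc (S N)) as HnpN.
  specialize (Hpos (S N)). rewrite <- Hact in Hpos by lia.
  unfold actions in Hpos. rewrite HN, Cmod_0 in Hpos by lia. simpl in Hpos. lra.
Qed.

End Isoset.

Lemma Iso_nonempty gamma : (forall n, 0 <= gamma n) -> ex_series (fun n => INR n * gamma n) ->
  exists zeta, Iso gamma zeta.
Proof.
  intros Hpos Hsum. exists (fun n => (sqrt (gamma n), 0)).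
  assert (Hact : forall n, actions (fun n => (sqrt (gamma n), 0)) n = gamma n)
    by (intro n; apply Cmod_real_sqrt_sq, Hpos).
  split.
  - apply (ex_series_ext (fun n => INR n * gamma n)); [|exact Hsum].
    intro n. rewrite Hact. reflexivity.
  - intros n _. apply Hact.
Qed.

Theorem theorem3p1 (b : R) (hb : 0 < b) (hirr : irrational b) :
  exists (np : nat -> nat) (gamma : nat -> R),
    (1 <= np 0)%nat /\
    (forall p : nat, (np p < np (S p))%nat) /\
    (forall p : nat, 0 < gamma (np p)) /\
    (forall n : nat, (forall p : nat, n <> np p) -> gamma n = 0) /\
    ex_series (fun n => INR n * gamma n) /\
    is_lim_seq (sum_n (fun p => INR (np p) ^ 3 * gamma (np p))) p_infty /\
    (forall p : nat, exists z : Z, omega gamma (np p) = b * IZR z) /\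
    (* consequences, in Birkhoff coordinates *)
    (exists zeta : nat -> C, Iso gamma zeta) /\
    (forall zeta : nat -> C, Iso gamma zeta ->
       ~ in_h_3half zeta /\
       (forall (t : R) (n : nat), BO_flow zeta (t + 2 * PI / b) n = BO_flow zeta t n) /\
       ~ finite_gap zeta).
Proof.
  destruct (square_frac_sequences b hb hirr)
    as (np & w & t & Hnp0 & Hinc & Hfrac & Hw1 & Ht & Hhalf & Ht0 & HtS & Hgap).
  set (gamma := telescoped np t).
  assert (Hpos : forall p, 0 < gamma (np p)) by (intro; eapply telescoped_at_pos; eauto).
  assert (Hoff : forall n, (forall p, n <> np p) -> gamma n = 0) by apply telescoped_off.
  assert (Hsum : ex_series (fun n => INR n * gamma n))
    by (eapply ex_series_telescoped_weighted; eauto).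
  assert (Hdiv : is_lim_seq (sum_n (fun p => INR (np p) ^ 3 * gamma (np p))) p_infty)
    by (eapply cube_sums_diverge; eauto).
  assert (Homega : forall p, exists z : Z, omega gamma (np p) = b * IZR z)
    by (intro; eapply omega_telescoped; eauto).
  exists np, gamma. do 7 (split; [assumption|]). split.
  - apply Iso_nonempty; [intro; eapply telescoped_nonneg; eauto | exact Hsum].
  - intros zeta Hiso. split; [|split].
    + exact (Iso_not_in_h_3half gamma zeta Hiso np Hinc Hoff Hdiv).
    + exact (Iso_BO_flow_periodic gamma zeta Hiso b np hb Hoff Homega).
    + exact (Iso_not_finite_gap gamma zeta Hiso np Hinc Hpos).
Qed.
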